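(* Let $X$ be a finite set. Define $\Phi:\mathbf{Net}(X)\to\mathbf{Cliqgm}(X)$ by letting $\Phi(N_X)(t)$ be the set of maximal cliques of the graph $G_t=(V_t,E_t)$ with $V_t=\{x\in X\mid N_X(x,x)\leq t\}$ and $E_t=\{\{x,x'\}\subset X\mid x\neq x',\ N_X(x,x')\leq t\}$ (equivalently, $\Phi(N_X)(t)$ is the join in $\mathbf{Cliq}(X)$ of the clique-sets $\{\{x,x'\}\}$ over all $x,x'\in X$ with $N_X(x,x')\leq t$). Define $\Psi:\mathbf{Cliqgm}(X)\to\mathbf{Net}(X)$ by $$\Psi(C_X)(x,x'):=\min\{t\in\mathbb{R}\mid x,x'\text{ belong to some clique in }C_X(t)\}.$$ Then $\Phi$ and $\Psi$ are well defined, mutually inverse bijections, and they are isomorphisms of posets: for $N_X,N'_X\in\mathbf{Net}(X)$, $N_X\geq N'_X$ entrywise if and only if $\Phi(N_X)(t)\leq\Phi(N'_X)(t)$ for all $t\in\mathbb{R}$.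
   Context: A phylogenetic network over a finite set $X$ is a map $N_X:X\times X\to\mathbb{R}$ with $N_X(x,x')=N_X(x',x)$ and $\max\{N_X(x,x),N_X(x',x')\}\leq N_X(x,x')$ for all $x,x'\in X$; $\mathbf{Net}(X)$ is the set of these, ordered by $N_X\leq N'_X$ iff $N_X\geq N'_X$ entrywise. A clique-set of $X$ is a set $\mathcal{C}$ of nonempty subsets of $X$ (cliques) such that (i) no member of $\mathcal{C}$ is contained in another member, and (ii) for every nonempty $Y\subset X$, if every pair $y,y'\in Y$ (possibly $y=y'$) is contained in some member of $\mathcal{C}$, then $Y$ is contained in some member of $\mathcal{C}$. $\mathbf{Cliq}(X)$ is the set of clique-sets, ordered by $\mathcal{C}\leq\mathcal{C}'$ iff every member of $\mathcal{C}$ is contained in some member of $\mathcal{C}'$; the join of clique-sets is the set of maximal cliques of the union of their associated graphs (vertices = union of members, edges = pairs of distinct elements lying in a common member). A cliquegram over $X$ is a map $C_X:\mathbb{R}\to\mathbf{Cliq}(X)$ such that (1) $C_X(t)\leq C_X(s)$ for $t\leq s$; (2) there are $t_0,t_1\in\mathbb{R}$ with $C_X(t)=\{X\}$ for $t\geq t_0$ and $C_X(t)=\emptyset$ for $t\leq t_1$; (3) there are real numbers $a_1<\dots<a_n$ with $C_X$ constant on $(-\infty,a_1)$, on each $[a_i,a_{i+1})$ and on $[a_n,\infty)$. $\mathbf{Cliqgm}(X)$ is the set of cliquegrams ordered pointwise. The maximal cliques of a graph are the inclusion-maximal vertex subsets that are pairwise adjacent. *)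

From HB Require Import structures.
From mathcomp Require Import all_boot all_order all_algebra.
From mathcomp Require Import boolp classical_sets reals.
Set Implicit Arguments. Unset Strict Implicit. Unset Printing Implicit Defensive.
Import Order.TTheory GRing.Theory Num.Theory.
Local Open Scope ring_scope.

Section Defs.
Variables (R : realType) (X : finType).

Definition is_network (N : X -> X -> R) : Prop :=
  forall x x', N x x' = N x' x /\ Num.max (N x x) (N x' x') <= N x x'.

Definition is_cliqueset (C : {set {set X}}) : Prop :=
  [/\ (forall A, A \in C -> A != @finset.set0 X),
      (forall A B, A \in C -> B \in C -> A \subset B -> A = B) &
      (forall Y : {set X}, Y != @finset.set0 X ->
         (forall y y', y \in Y -> y' \in Y ->
            exists2 A, A \in C & (y \in A) && (y' \in A)) ->
         exists2 A, A \in C & Y \subset A)].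

Definition cliq_le (C C' : {set {set X}}) : Prop :=
  forall A, A \in C -> exists2 B, B \in C' & A \subset B.

(* Condition (3): for a strictly increasing finite list
   a_1 < ... < a_n, C is constant on each piece (-oo,a_1), [a_i,a_{i+1}),
   [a_n,+oo), i.e. C t = C t' whenever t, t' lie above the same a_i's. *)
Definition is_cliquegram (C : R -> {set {set X}}) : Prop :=
  [/\ (forall t, is_cliqueset (C t)),
      (forall t s, t <= s -> cliq_le (C t) (C s)),
      (exists t0 t1 : R, forall t,
          (t0 <= t -> C t = finset.set1 (finset.setTfor X)) /\ (t <= t1 -> C t = (finset.set0 : {set {set X}}))) &
      (exists s : seq R, sorted <%R s /\
          forall t t', (forall a, a \in s -> (a <= t) = (a <= t')) -> C t = C t')].

(* The graph G_t of a network: K is a (nonempty) clique of G_t. *)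
Definition clique_at (N : X -> X -> R) (t : R) (K : {set X}) : bool :=
  [&& K != @finset.set0 X,
      [forall x in K, N x x <= t] &
      [forall x in K, forall y in K, (x != y) ==> (N x y <= t)]].

Definition max_clique_at (N : X -> X -> R) (t : R) (K : {set X}) : bool :=
  clique_at N t K &&
  [forall L : {set X}, (clique_at N t L && (K \subset L)) ==> (L == K)].

Definition Phi (N : X -> X -> R) (t : R) : {set {set X}} :=
  [set K | max_clique_at N t K].

Definition together_times (C : R -> {set {set X}}) (x x' : X) : set R :=
  [set t | exists2 A, A \in C t & (x \in A) && (x' \in A)].

(* Psi(C)(x,x') = min of that set (defined as its infimum; that the
   infimum is attained is part of the theorem). *)
Definition Psi (C : R -> {set {set X}}) (x x' : X) : R :=
  inf (together_times C x x').

End Defs.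

From HB Require Import structures.
From mathcomp Require Import boolp classical_sets reals.
From mathcomp Require Import all_boot all_order all_algebra.
From mathcomp Require Import lra.
Import Order.TTheory GRing.Theory Num.Theory.
Local Open Scope ring_scope.
Set Implicit Arguments. Unset Strict Implicit. Unset Printing Implicit Defensive.

(* Everything rests on one observation about the graph G_t of a function
   N : X -> X -> R: every clique of G_t extends to a maximal one, so
   x and x' lie in a common member of Phi N t iff N x x' <= t (for a
   network, where the pair {x, x'} is itself a clique exactly then).
   - From this, Phi N is a clique-set at each t, is monotone, is {X} for t
     above every |N|-value and empty far below, and only changes at the finitely
     many values of N; hence Phi N is a cliquegram.  The same observation
     gives Psi (Phi N) = N (the minimum is attained at N x x') and the
     order isomorphism.
   - Conversely, for a cliquegram C the set of times at which x, x' lie in a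
     common clique is up-closed and bounded below; since C is constant just
     to the right of every point, its infimum belongs to it.  Thus
     Psi C x x' <= t iff x, x' share a clique of C t, so the cliques of
     G_t(Psi C) are the sets all of whose pairs share a clique of C t; by
     the clique-set axioms their maximal members are exactly C t. *)

Section Infimum.
Variable R : realType.

Lemma inf_attained (S : set R) a : S a -> (forall t, S t -> a <= t) -> inf S = a.
Proof.
move=> Sa lbS; apply/le_anti/andP; split.
  by apply: ge_inf Sa; exists a.
by apply: lb_le_inf; [exists a | exact: lbS].
Qed.

End Infimum.

Section GraphCliques.
Variables (R : realType) (X : finType) (N : X -> X -> R).
Implicit Types (K L : {set X}) (t s : R) (x y : X).

Lemma clique_pair t K x y : clique_at N t K -> x \in K -> y \in K -> N x y <= t.
Proof.
case/and3P=> _ /forall_inP vertK /forall_inP edgeK xK yK.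
have [<-|neq_xy] := eqVneq x y; first exact: vertK.
by move/forall_inP/(_ y yK)/implyP: (edgeK x xK); apply.
Qed.

Lemma cliqueP t K : K != set0 -> (forall x y, x \in K -> y \in K -> N x y <= t) ->
  clique_at N t K.
Proof.
move=> K0 bndK; apply/and3P; split => //.
  by apply/forall_inP => x xK; apply: bndK.
by apply/forall_inP => x xK; apply/forall_inP => y yK; apply/implyP => _; apply: bndK.
Qed.

Lemma clique_mono t s K : t <= s -> clique_at N t K -> clique_at N s K.
Proof.
move=> le_ts cK; apply: cliqueP; first by case/and3P: cK.
by move=> x y xK yK; apply: le_trans le_ts; apply: clique_pair cK xK yK.
Qed.

Lemma max_clique_eq t K L : max_clique_at N t K -> clique_at N t L -> K \subset L -> L = K.
Proof. by case/andP=> _ /forallP maxK cL KL; move: (maxK L); rewrite cL KL => /eqP. Qed.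

(* Every clique lies in a maximal clique (take a largest clique above it). *)
Lemma clique_extends t K : clique_at N t K -> exists2 L, max_clique_at N t L & K \subset L.
Proof.
move=> cK; have PK : clique_at N t K && (K \subset K) by rewrite cK subxx.
pose above L := clique_at N t L && (K \subset L).
case: (@arg_maxnP _ K above (fun L => #|L|) PK) => L /andP[cL KL] maxL.
exists L => //; apply/andP; split => //; apply/forallP => L'; apply/implyP.
case/andP=> cL' LL'; rewrite eq_sym eqEcard LL' /=.
by apply: maxL; rewrite /above cL' (subset_trans KL LL').
Qed.

Lemma Phi_sublevel_eq t t' : (forall x y, (N x y <= t) = (N x y <= t')) -> Phi N t = Phi N t'.
Proof.
move=> same; have clE K : clique_at N t K = clique_at N t' K.
  apply/idP/idP => cK; apply: cliqueP; try by case/and3P: cK.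
    by move=> x y xK yK; rewrite -same; apply: clique_pair cK xK yK.
  by move=> x y xK yK; rewrite same; apply: clique_pair cK xK yK.
apply/setP => K; rewrite !inE /max_clique_at clE; congr (_ && _).
by apply: eq_forallb => L; rewrite clE.
Qed.

Hypothesis netN : is_network N.

Lemma pair_clique t x y : clique_at N t [set x; y] = (N x y <= t).
Proof.
apply/idP/idP => [cxy|le_t]; first by apply: clique_pair cxy _ _; rewrite !inE eqxx ?orbT.
have [symN] := netN x y; rewrite ge_max => /andP[lexx leyy].
apply: cliqueP; first by apply/set0Pn; exists x; rewrite !inE eqxx.
move=> a b; rewrite !inE => /orP[]/eqP-> /orP[]/eqP->.
- exact: le_trans lexx le_t.
- exact: le_t.
- by rewrite -symN.
- exact: le_trans leyy le_t.
Qed.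

Lemma together_Phi x y t : together_times (Phi N) x y t <-> N x y <= t.
Proof.
split; first by case=> A; rewrite inE => /andP[cA _] /andP[xA yA]; apply: clique_pair cA xA yA.
rewrite -pair_clique => /clique_extends[L maxL xyL]; exists L; first by rewrite inE.
by rewrite !(subsetP xyL) // !inE eqxx ?orbT.
Qed.

(* Psi is a left inverse of Phi: the minimum is attained at N x y. *)
Lemma Psi_Phi : Psi (Phi N) = N.
Proof.
apply/funext => x; apply/funext => y.
by apply: inf_attained => [|t]; rewrite together_Phi.
Qed.

End GraphCliques.

Section PhiCliquegram.
Variables (R : realType) (X : finType) (N : X -> X -> R).
Implicit Types (K : {set X}) (t s : R).

(* Maximal cliques form a clique-set: a set whose pairs are covered is a
   clique, hence lies in a maximal one. *)
Lemma Phi_cliqueset t : is_cliqueset (Phi N t).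
Proof.
split.
- by move=> A; rewrite inE => /andP[/and3P[]].
- move=> A B; rewrite !inE => maxA /andP[cB _] AB.
  by apply/esym; apply: max_clique_eq maxA cB AB.
- move=> Y Y0 pairsY.
  have cY : clique_at N t Y.
    apply: cliqueP => // x y xY yY; have [A] := pairsY x y xY yY.
    by rewrite inE => /andP[cA _] /andP[xA yA]; apply: clique_pair cA xA yA.
  by have [L maxL YL] := clique_extends cY; exists L; rewrite ?inE.
Qed.

(* A maximal clique at t is a clique at s >= t, hence lies in a maximal one. *)
Lemma Phi_mono t s : t <= s -> cliq_le (Phi N t) (Phi N s).
Proof.
move=> le_ts A; rewrite inE => /andP[cA _].
by have [L maxL AL] := clique_extends (clique_mono le_ts cA); exists L; rewrite ?inE.
Qed.

Definition net_bound : R := \sum_(p : X * X) `|N p.1 p.2|.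

Lemma net_bound_ge x y : `|N x y| <= net_bound.
Proof.
rewrite /net_bound (bigD1 (x, y)) //= lerDl.
by apply: sumr_ge0 => p _; apply: normr_ge0.
Qed.

Lemma Phi_top t : (0 < #|X|)%N -> net_bound <= t -> Phi N t = [set setT].
Proof.
move=> X_gt0 le_bt; have cT : clique_at N t setT.
  apply: cliqueP; first by rewrite -card_gt0 cardsT.
  by move=> x y _ _; apply: le_trans (ler_norm _) (le_trans (net_bound_ge x y) le_bt).
apply/setP => K; rewrite !inE; apply/idP/eqP => [maxK|->].
  by apply/esym; apply: max_clique_eq maxK cT (subsetT K).
apply/andP; split => //; apply/forallP => L; apply/implyP => /andP[_ TL].
by rewrite eqEsubset TL subsetT.
Qed.

Lemma Phi_bot t : t <= - net_bound - 1 -> Phi N t = set0.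
Proof.
move=> le_tb; apply/setP => K; rewrite !inE; apply/negbTE/negP => /andP[cK _].
have /set0Pn[x xK] : K != set0 by case/and3P: cK.
have := clique_pair cK xK xK; have := net_bound_ge x x.
have : - `|N x x| <= N x x by rewrite lerNl -normrN ler_norm.
lra.
Qed.

(* Phi N is a cliquegram; its breakpoints are the values of N. *)
Lemma Phi_cliquegram : (0 < #|X|)%N -> is_cliquegram (Phi N).
Proof.
move=> X_gt0; split.
- exact: Phi_cliqueset.
- exact: Phi_mono.
- by exists net_bound, (- net_bound - 1) => t; split; [exact: Phi_top | exact: Phi_bot].
- pose vals := [seq N p.1 p.2 | p <- enum [set: X * X]].
  exists (sort <=%R (undup vals)); split; first by rewrite sort_lt_sorted undup_uniq.
  move=> t t' same; apply: Phi_sublevel_eq => x y; apply: same.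
  by rewrite mem_sort mem_undup; apply: (map_f _ (x := (x, y))); rewrite mem_enum inE.
Qed.

End PhiCliquegram.

Lemma Phi_order_iso (R : realType) (X : finType) (N N' : X -> X -> R) :
  is_network N ->
  ((forall x x', N' x x' <= N x x') <-> (forall t, cliq_le (Phi N t) (Phi N' t))).
Proof.
move=> netN; split=> [leN t A|lePhi x y].
  rewrite inE => /andP[cA _]; have cA' : clique_at N' t A.
    apply: cliqueP; first by case/and3P: cA.
    by move=> x y xA yA; apply: le_trans (leN x y) (clique_pair cA xA yA).
  by have [L maxL AL] := clique_extends cA'; exists L; rewrite ?inE.
have /clique_extends[L maxL xyL] : clique_at N (N x y) [set x; y] by rewrite pair_clique.
have /lePhi[B] : L \in Phi N (N x y) by rewrite inE.
rewrite inE => /andP[cB _] LB; apply: clique_pair cB _ _;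
by rewrite (subsetP LB) // (subsetP xyL) // !inE eqxx ?orbT.
Qed.

Lemma gap_right (R : realDomainType) (s : seq R) (m : R) :
  exists2 b, m < b & forall a, a \in s -> m < a -> b <= a.
Proof.
elim: s => [|a s [b lt_mb gap_b]]; first by exists (m + 1) => //; rewrite ltrDl.
have [lt_ma|le_am] := ltP m a.
  exists (Num.min a b) => [|c]; first by rewrite lt_min lt_ma.
  by rewrite inE => /orP[/eqP->|cs] lt_mc; rewrite ge_min ?lexx // gap_b ?orbT.
by exists b => // c; rewrite inE => /orP[/eqP->|/gap_b//]; rewrite ltNge le_am.
Qed.

Lemma step_right_constant (R : realDomainType) (T : Type) (f : R -> T) (s : seq R) :
  (forall t t', (forall a, a \in s -> (a <= t) = (a <= t')) -> f t = f t') ->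
  forall m, exists2 b, m < b & forall t, m <= t -> t < b -> f t = f m.
Proof.
move=> stepf m; have [b lt_mb gap_b] := gap_right s m.
exists b => // t le_mt lt_tb; apply: stepf => a sa.
apply/idP/idP => [le_at|le_am]; last exact: le_trans le_mt.
rewrite leNgt; apply/negP => lt_ma.
by move: (lt_le_trans lt_tb (gap_b a sa lt_ma)); rewrite ltNge le_at.
Qed.

Section PsiNetwork.
Variables (R : realType) (X : finType) (C : R -> {set {set X}}).
Implicit Types (K L : {set X}) (t u : R) (x y : X).
Hypothesis gramC : is_cliquegram C.

Let T x y := together_times C x y.

Lemma together_up x y t u : T x y t -> t <= u -> T x y u.
Proof.
case: gramC => _ monoC _ _ [A AC /andP[xA yA]] le_tu.
have [B BC AB] := monoC t u le_tu A AC.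
by exists B => //; rewrite !(subsetP AB).
Qed.

Lemma together_top : exists t0, forall x y t, t0 <= t -> T x y t.
Proof.
case: gramC => _ _ [t0 [t1 boundsC]] _; exists t0 => x y t le_t0t.
by exists setT; [rewrite (proj1 (boundsC t) le_t0t) inE | rewrite !inE].
Qed.

Lemma together_bot : exists t1, forall x y t, T x y t -> t1 < t.
Proof.
case: gramC => _ _ [t0 [t1 boundsC]] _; exists t1 => x y t [A AC _].
by rewrite ltNge; apply/negP => le_tt1; move: AC; rewrite (proj2 (boundsC t) le_tt1) inE.
Qed.

Lemma Psi_le x y t : T x y t -> Psi C x y <= t.
Proof.
have [t1 gt_t1] := together_bot => Txy; apply: ge_inf Txy.
by exists t1 => u Tu; apply/ltW/(gt_t1 x y).
Qed.

(* The infimum is a minimum, because C is constant just after Psi C x y. *)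
Lemma Psi_together x y : T x y (Psi C x y).
Proof.
set m := Psi C x y.
have [_ _ _ [s [_ stepC]]] := gramC.
have [b lt_mb constC] := step_right_constant stepC m.
have [t0 top] := together_top.
have Txy_ne : exists u, T x y u by exists t0; apply: top.
have [t Tt lt_tb] := inf_lt Txy_ne lt_mb.
have [A AC xyA] := Tt; exists A => //.
by rewrite -(constC t) // Psi_le.
Qed.

Lemma Psi_leP x y t : Psi C x y <= t <-> T x y t.
Proof. by split; [apply: together_up; apply: Psi_together | exact: Psi_le]. Qed.

(* Psi C is symmetric, and the pair x, x' can only meet once both are alive. *)
Lemma Psi_network : is_network (Psi C).
Proof.
move=> x y; split.
  rewrite /Psi /together_times; congr (inf _); apply/seteqP.
  by split=> t [A AC xyA]; exists A => //; rewrite andbC.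
have [A AC /andP[xA yA]] := Psi_together x y.
by rewrite ge_max; apply/andP; split; apply/Psi_leP; exists A; rewrite ?xA ?yA.
Qed.

Lemma clique_Psi t K : clique_at (Psi C) t K <->
  K != set0 /\ (forall x y, x \in K -> y \in K -> T x y t).
Proof.
split=> [cK|[K0 pairsK]]; last by apply: cliqueP => // x y xK yK; apply/Psi_leP/pairsK.
split; first by case/and3P: cK.
by move=> x y xK yK; apply/Psi_leP; apply: clique_pair cK xK yK.
Qed.

(* Phi is a left inverse of Psi: the maximal cliques of G_t(Psi C) are the
   members of C t, by closure and the antichain property of C t. *)
Lemma Phi_Psi : Phi (Psi C) = C.
Proof.
apply/funext => t; have [cliqC _ _ _] := gramC; have [nonempty antichain closed] := cliqC t.
have cliqueC B : B \in C t -> clique_at (Psi C) t B.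
  move=> BC; apply/clique_Psi; split; first exact: nonempty.
  by move=> x y xB yB; exists B => //; rewrite xB yB.
apply/setP => K; rewrite inE; apply/idP/idP => [maxK|KC].
  have /clique_Psi[K0 pairsK] : clique_at (Psi C) t K by case/andP: maxK.
  have [B BC KB] := closed K K0 pairsK.
  by rewrite -(max_clique_eq maxK (cliqueC B BC) KB).
apply/andP; split; first exact: cliqueC.
apply/forallP => L; apply/implyP => /andP[/clique_Psi[L0 pairsL] KL].
have [B BC LB] := closed L L0 pairsL.
by rewrite eqEsubset KL andbT (antichain K B KC BC (subset_trans KL LB)).
Qed.

End PsiNetwork.

Theorem mainTheorem2 (R : realType) (X : finType) (hX : (0 < #|X|)%N) :
  [/\ (* Phi is well defined *)
      (forall N : X -> X -> R, is_network N -> is_cliquegram (Phi N)),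
      (* Psi is well defined: the minimum exists, and Psi C is a network *)
      (forall C : R -> {set {set X}}, is_cliquegram C ->
         (forall x x', together_times C x x' (Psi C x x')) /\ is_network (Psi C)),
      (* mutually inverse *)
      (forall N : X -> X -> R, is_network N -> Psi (Phi N) = N),
      (forall C : R -> {set {set X}}, is_cliquegram C -> Phi (Psi C) = C) &
      (* poset isomorphism *)
      (forall N N' : X -> X -> R, is_network N -> is_network N' ->
         ((forall x x', N' x x' <= N x x') <->
          (forall t, cliq_le (Phi N t) (Phi N' t))))].
Proof.
split.
- by move=> N _; apply: Phi_cliquegram.
- by move=> C gramC; split; [exact: Psi_together | exact: Psi_network].
- by move=> N netN; apply: Psi_Phi.
- by move=> C gramC; apply: Phi_Psi.
- by move=> N N' netN _; apply: Phi_order_iso.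
Qed.
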